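(* Let $n \ge 1$ be an integer, let $X_1,\dots,X_n$ be i.i.d. Bernoulli random variables with $\Pr\{X_i=1\}=p\in(0,1)$, and let $K=\sum_{i=1}^n X_i$. For $\delta\in(0,1)$ define \[ L_{n,\delta} = \frac{K}{n} + \frac{3}{4}\,\frac{1-\frac{2K}{n}-\sqrt{1+\frac{9}{2\ln\frac{2}{\delta}}\,K\left(1-\frac{K}{n}\right)}}{1+\frac{9n}{8\ln\frac{2}{\delta}}},\qquad U_{n,\delta} = \frac{K}{n} + \frac{3}{4}\,\frac{1-\frac{2K}{n}+\sqrt{1+\frac{9}{2\ln\frac{2}{\delta}}\,K\left(1-\frac{K}{n}\right)}}{1+\frac{9n}{8\ln\frac{2}{\delta}}}. \] Then for any fixed $n$ and $p\in(0,1)$, the coverage probability of the confidence interval $[L_{n,\delta},U_{n,\delta}]$, i.e. $\Pr\{L_{n,\delta}\le p\le U_{n,\delta}\mid p\}$, decreases as $\delta$ increases.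
   Context: $\Pr\{\cdot\mid p\}$ denotes probability when the Bernoulli parameter equals $p$, so that $K$ is binomially distributed with parameters $n$ and $p$. *)

From Stdlib Require Import Reals.
Open Scope R_scope.

Definition Lbound (n : nat) (delta : R) (k : nat) : R :=
  let K := INR k in
  let N := INR n in
  let c := ln (2 / delta) in
  K / N + 3 / 4 *
    ((1 - 2 * K / N - sqrt (1 + 9 / (2 * c) * K * (1 - K / N)))
     / (1 + 9 * N / (8 * c))).

Definition Ubound (n : nat) (delta : R) (k : nat) : R :=
  let K := INR k in
  let N := INR n in
  let c := ln (2 / delta) in
  K / N + 3 / 4 *
    ((1 - 2 * K / N + sqrt (1 + 9 / (2 * c) * K * (1 - K / N)))
     / (1 + 9 * N / (8 * c))).

Definition binom_pmf (n : nat) (p : R) (k : nat) : R :=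
  C n k * p ^ k * (1 - p) ^ (n - k).

Definition covers (n : nat) (delta p : R) (k : nat) : R :=
  if Rle_dec (Lbound n delta k) p then
    if Rle_dec p (Ubound n delta k) then 1 else 0
  else 0.

(* Coverage probability Pr{ L_{n,delta} <= p <= U_{n,delta} | p },
   K ~ Binomial(n, p); sum over k = 0..n (sum_f_R0 f n has n+1 terms). *)
Definition coverage (n : nat) (delta p : R) : R :=
  sum_f_R0 (fun k => binom_pmf n p k * covers n delta p k) n.

(* With x = K/n and b = 9n/(8 ln(2/δ)), the limits L and U are the two roots in p
   of the quadratic (1 + b)(p - x)^2 - 3/2 (1 - 2x)(p - x) - 9/4 x(1 - x), so the
   interval covers p exactly when this quadratic is nonpositive at p.  The quadratic
   increases with b, and b increases with δ; hence for every outcome K the interval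
   for the larger δ covers p only if the one for the smaller δ does, and summing
   against the binomial weights gives the monotonicity of the coverage. *)

From Stdlib Require Import Reals Lra Psatz.
Open Scope R_scope.

Lemma interval_iff_prod_nonpos (L U p : R) :
  L <= U -> (L <= p <= U <-> (p - L) * (p - U) <= 0).
Proof.
  intros HLU; split.
  - intros [HL HU]; nra.
  - intros Hprod; destruct (Rle_dec L p), (Rle_dec p U); try lra; nra.
Qed.

Definition cover_poly (x b p : R) : R :=
  (1 + b) * (p - x) ^ 2 - 3 / 2 * (1 - 2 * x) * (p - x) - 9 / 4 * x * (1 - x).

Definition root_disc (x b : R) : R := sqrt (1 + 4 * b * x * (1 - x)).

Definition root_lo (x b : R) : R :=
  x + 3 / 4 * ((1 - 2 * x - root_disc x b) / (1 + b)).

Definition root_hi (x b : R) : R :=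
  x + 3 / 4 * ((1 - 2 * x + root_disc x b) / (1 + b)).

Section Roots.

Variables x b : R.
Hypothesis x_01 : 0 <= x <= 1.
Hypothesis b_ge0 : 0 <= b.

Lemma root_disc_sqr : root_disc x b * root_disc x b = 1 + 4 * b * x * (1 - x).
Proof.
  apply sqrt_sqrt.
  assert (0 <= b * (x * (1 - x))) by (apply Rmult_le_pos; nra).
  nra.
Qed.

Lemma cover_poly_factor (p : R) :
  cover_poly x b p = (1 + b) * ((p - root_lo x b) * (p - root_hi x b)).
Proof.
  pose proof root_disc_sqr as Hsqr.
  unfold cover_poly, root_lo, root_hi.
  set (r := root_disc x b) in *; clearbody r.
  field_simplify; [|lra].
  replace (r ^ 2) with (r * r) by ring; rewrite Hsqr.
  field; lra.
Qed.

Lemma root_lo_le_hi : root_lo x b <= root_hi x b.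
Proof.
  unfold root_lo, root_hi, Rdiv.
  pose proof (sqrt_pos (1 + 4 * b * x * (1 - x))) as Hr; fold (root_disc x b) in Hr.
  assert (Hinv : 0 < / (1 + b)) by (apply Rinv_0_lt_compat; lra).
  nra.
Qed.

Lemma between_roots_iff (p : R) :
  root_lo x b <= p <= root_hi x b <-> cover_poly x b p <= 0.
Proof.
  rewrite (interval_iff_prod_nonpos _ _ p root_lo_le_hi), cover_poly_factor.
  split; intros H; nra.
Qed.

End Roots.

Lemma cover_poly_le_scale (x b1 b2 p : R) :
  b1 <= b2 -> cover_poly x b1 p <= cover_poly x b2 p.
Proof. intros Hb; unfold cover_poly; pose proof (pow2_ge_0 (p - x)); nra. Qed.

Lemma between_roots_antimono (x b1 b2 p : R) :
  0 <= x <= 1 -> 0 <= b1 -> b1 <= b2 ->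
  root_lo x b2 <= p <= root_hi x b2 -> root_lo x b1 <= p <= root_hi x b1.
Proof.
  intros Hx Hb1 Hb12.
  rewrite (between_roots_iff x b2), (between_roots_iff x b1) by lra.
  pose proof (cover_poly_le_scale x b1 b2 p Hb12); lra.
Qed.

Definition bound_scale (n : nat) (delta : R) : R := 9 * INR n / (8 * ln (2 / delta)).

Lemma ln_two_div_pos (delta : R) : 0 < delta < 1 -> 0 < ln (2 / delta).
Proof.
  intros Hd; rewrite <- ln_1; apply ln_increasing; [lra|].
  apply (Rmult_lt_reg_r delta); [lra|].
  unfold Rdiv; rewrite Rmult_assoc, Rinv_l; lra.
Qed.

Lemma bound_scale_ge0 (n : nat) (delta : R) : 0 < delta < 1 -> 0 <= bound_scale n delta.
Proof.
  intros Hd; pose proof (ln_two_div_pos delta Hd); pose proof (pos_INR n).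
  assert (0 < / (8 * ln (2 / delta))) by (apply Rinv_0_lt_compat; lra).
  unfold bound_scale, Rdiv; nra.
Qed.

Lemma bound_scale_le (n : nat) (delta1 delta2 : R) :
  0 < delta1 < 1 -> 0 < delta2 < 1 -> delta1 <= delta2 ->
  bound_scale n delta1 <= bound_scale n delta2.
Proof.
  intros H1 H2 H12.
  pose proof (ln_two_div_pos delta2 H2) as Hc2.
  assert (Hc12 : ln (2 / delta2) <= ln (2 / delta1)).
  { destruct H12 as [Hlt | ->]; [|lra].
    left; apply ln_increasing; [apply Rdiv_lt_0_compat; lra|].
    unfold Rdiv; apply Rmult_lt_compat_l; [lra|]; apply Rinv_lt_contravar; nra. }
  unfold bound_scale, Rdiv; apply Rmult_le_compat_l; [pose proof (pos_INR n); lra|].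
  apply Rinv_le_contravar; lra.
Qed.

Section Bounds.

Variables (n k : nat) (delta : R).
Hypothesis n_pos : (1 <= n)%nat.
Hypothesis delta_01 : 0 < delta < 1.

Let N_pos : 0 < INR n. Proof. apply lt_0_INR; lia. Qed.
Let c_pos : 0 < ln (2 / delta). Proof. exact (ln_two_div_pos delta delta_01). Qed.

Lemma root_disc_bound :
  sqrt (1 + 9 / (2 * ln (2 / delta)) * INR k * (1 - INR k / INR n))
  = root_disc (INR k / INR n) (bound_scale n delta).
Proof. unfold root_disc, bound_scale; f_equal; field; lra. Qed.

Lemma Lbound_root_lo : Lbound n delta k = root_lo (INR k / INR n) (bound_scale n delta).
Proof.
  unfold Lbound, root_lo; cbv zeta; rewrite root_disc_bound.
  unfold bound_scale, Rdiv; ring.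
Qed.

Lemma Ubound_root_hi : Ubound n delta k = root_hi (INR k / INR n) (bound_scale n delta).
Proof.
  unfold Ubound, root_hi; cbv zeta; rewrite root_disc_bound.
  unfold bound_scale, Rdiv; ring.
Qed.

End Bounds.

Lemma frequency_01 (n k : nat) : (1 <= n)%nat -> (k <= n)%nat -> 0 <= INR k / INR n <= 1.
Proof.
  intros Hn Hk.
  assert (HN : 0 < INR n) by (apply lt_0_INR; lia).
  assert (HK : INR k <= INR n) by (apply le_INR; exact Hk).
  pose proof (pos_INR k); pose proof (Rinv_0_lt_compat _ HN).
  split; [unfold Rdiv; nra|].
  apply (Rmult_le_reg_r (INR n)); [lra|].
  unfold Rdiv; rewrite Rmult_assoc, Rinv_l; lra.
Qed.

Lemma covers_antimono (n k : nat) (p delta1 delta2 : R) :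
  (1 <= n)%nat -> (k <= n)%nat ->
  0 < delta1 < 1 -> 0 < delta2 < 1 -> delta1 <= delta2 ->
  covers n delta2 p k <= covers n delta1 p k.
Proof.
  intros Hn Hk H1 H2 H12.
  assert (Himp : Lbound n delta2 k <= p <= Ubound n delta2 k ->
              Lbound n delta1 k <= p <= Ubound n delta1 k).
  { rewrite !Lbound_root_lo, !Ubound_root_hi by assumption.
    apply between_roots_antimono;
      [apply frequency_01 | apply bound_scale_ge0 | apply bound_scale_le]; assumption. }
  unfold covers.
  destruct (Rle_dec (Lbound n delta2 k) p), (Rle_dec p (Ubound n delta2 k)),
    (Rle_dec (Lbound n delta1 k) p), (Rle_dec p (Ubound n delta1 k)); lra.
Qed.

Lemma binom_pmf_ge0 (n : nat) (p : R) (k : nat) : 0 <= p <= 1 -> 0 <= binom_pmf n p k.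
Proof.
  intros Hp; unfold binom_pmf, C.
  apply Rmult_le_pos; [apply Rmult_le_pos|]; try (apply pow_le; lra).
  unfold Rdiv; apply Rmult_le_pos; [apply pos_INR|].
  left; apply Rinv_0_lt_compat, Rmult_lt_0_compat; apply INR_fact_lt_0.
Qed.

Theorem theorem1 (n : nat) (p delta1 delta2 : R) :
  (1 <= n)%nat -> 0 < p < 1 ->
  0 < delta1 < 1 -> 0 < delta2 < 1 -> delta1 <= delta2 ->
  coverage n delta2 p <= coverage n delta1 p.
Proof.
  intros Hn Hp H1 H2 H12; unfold coverage.
  apply sum_Rle; intros k Hk.
  apply Rmult_le_compat_l; [apply binom_pmf_ge0; lra|].
  apply covers_antimono; assumption.
Qed.
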